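(* Let $X$ be an L-space and $U\in{\sf ClopUp}(X)$. (1) $\mathrm{cen}\,U\subseteq\mathrm{reg}\,U$. (2) If $X$ is a zero-dimensional L-space, then $X$ is a regular L-space. (3) If $X$ is a Stone L-space, then $X$ is a compact regular L-space.
   Context: A Priestley space is a Stone space $X$ with a partial order such that clopen upsets separate points. An L-space is a Priestley space in which the downset of each clopen set is clopen and the closure of each open upset is open. ${\sf ClopUp}(X)$ is the set of clopen upsets; $\mathrm{cl}$ denotes closure. A biset is a subset that is both an upset and a downset; ${\sf ClopBi}(X)$ is the set of clopen bisets. For $U\in{\sf ClopUp}(X)$: $\mathrm{cen}\,U=\bigcup\{V\in{\sf ClopBi}(X)\mid V\subseteq U\}$; $\mathrm{reg}\,U=\bigcup\{V\in{\sf ClopUp}(X)\mid {\downarrow}V\subseteq U\}$. For $U,V\in{\sf ClopUp}(X)$, $V\ll U$ means that for every open upset $W$, $U\subseteq\mathrm{cl}\,W$ implies $V\subseteq W$; $\ker U=\bigcup\{V\in{\sf ClopUp}(X)\mid V\ll U\}$. $X$ is L-compact if $X=\ker X$. $X$ is a zero-dimensional L-space if $\mathrm{cen}\,U$ is dense in $U$ for every $U\in{\sf ClopUp}(X)$; a Stone L-space is an L-compact zero-dimensional L-space. $X$ is a regular L-space if $\mathrm{reg}\,U$ is dense in $U$ for every $U\in{\sf ClopUp}(X)$; a compact regular L-space is an L-compact regular L-space. *)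

From mathcomp Require Import all_boot all_order.
From mathcomp Require Import all_classical all_reals all_analysis.
Set Implicit Arguments. Unset Strict Implicit. Unset Printing Implicit Defensive.
Local Open Scope classical_set_scope.

Section LSpaces.
Variables (T : topologicalType) (le : T -> T -> Prop).

Definition is_partial_order :=
  [/\ forall x, le x x,
      forall x y z, le x y -> le y z -> le x z &
      forall x y, le x y -> le y x -> x = y].

Definition upset (A : set T) := forall x y, A x -> le x y -> A y.
Definition downset (A : set T) := forall x y, A y -> le x y -> A x.
Definition biset (A : set T) := upset A /\ downset A.

Definition down (A : set T) : set T := [set x | exists2 y, A y & le x y].

Definition stone_space := [/\ compact [set: T], hausdorff_space T & zero_dimensional T].

Definition priestley_space :=
  [/\ stone_space, is_partial_order &
      forall x y, ~ le x y -> exists U, [/\ clopen U, upset U, U x & ~ U y]].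

Definition ClopUp (U : set T) := clopen U /\ upset U.
Definition ClopBi (U : set T) := clopen U /\ biset U.

Definition L_space :=
  [/\ priestley_space,
      forall A, clopen A -> clopen (down A) &
      forall W, open W -> upset W -> open (closure W)].

Definition cen (U : set T) : set T := \bigcup_(V in [set V | ClopBi V /\ V `<=` U]) V.
Definition reg (U : set T) : set T := \bigcup_(V in [set V | ClopUp V /\ down V `<=` U]) V.

Definition way_below (V U : set T) :=
  forall W, open W -> upset W -> U `<=` closure W -> V `<=` W.

Definition ker (U : set T) : set T := \bigcup_(V in [set V | ClopUp V /\ way_below V U]) V.

Definition L_compact := [set: T] = ker [set: T].

Definition dense_in (A U : set T) := U `<=` closure A.

Definition zero_dim_L_space := L_space /\ forall U, ClopUp U -> dense_in (cen U) U.
Definition stone_L_space := L_compact /\ zero_dim_L_space.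
Definition regular_L_space := L_space /\ forall U, ClopUp U -> dense_in (reg U) U.
Definition compact_regular_L_space := L_compact /\ regular_L_space.

End LSpaces.

From Pilot Require Import Defs.
From mathcomp Require Import all_boot all_order.
From mathcomp Require Import all_classical all_reals all_analysis.
Local Open Scope classical_set_scope.

(* A clopen biset V inside U is its own downset, so it witnesses membership
   in reg U; hence cen U <= reg U, and density of cen U passes to reg U. *)

Section CenterRegular.
Variables (T : topologicalType) (le : T -> T -> Prop).

Lemma down_sub_downset (V : set T) : downset le V -> Defs.down le V `<=` V.
Proof. by move=> dV x [y Vy lxy]; exact: dV Vy lxy. Qed.

Lemma cen_sub_reg (U : set T) : cen le U `<=` reg le U.
Proof.
move=> x [V [[cV [uV dV]] VU] Vx]; exists V => //.
by split=> //; apply: subset_trans VU; exact: down_sub_downset.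
Qed.

Lemma dense_inS (A B U : set T) : A `<=` B -> dense_in A U -> dense_in B U.
Proof. by move=> AB AU x /AU; exact: closure_subset. Qed.

Lemma zero_dim_L_space_regular : zero_dim_L_space le -> regular_L_space le.
Proof.
move=> [HL cen_dense]; split=> // U HU.
exact: dense_inS (cen_sub_reg U) (cen_dense U HU).
Qed.

Lemma stone_L_space_compact_regular :
  stone_L_space le -> compact_regular_L_space le.
Proof. by move=> [Lc zd]; split=> //; exact: zero_dim_L_space_regular. Qed.

End CenterRegular.

Theorem lemma5p12 (T : topologicalType) (le : T -> T -> Prop)
  (HX : L_space le) (U : set T) (HU : ClopUp le U) :
  [/\ cen le U `<=` reg le U,
      zero_dim_L_space le -> regular_L_space le &
      stone_L_space le -> compact_regular_L_space le].
Proof.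
split; [exact: cen_sub_reg | exact: zero_dim_L_space_regular |].
exact: stone_L_space_compact_regular.
Qed.
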